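(* Let $n_1,n_2,n_3\in\mathbb{N}$, let $\sigma$ be a segment label map on $G=\{1,\dots,n_1\}\times\{1,\dots,n_2\}\times\{1,\dots,n_3\}$, fix any decomposition of $T$ into blocks, let $\tau=\mathrm{LABEL}(\sigma,T)$ and let $\tau'$ be the output of the block-wise method. Then for all 1-cells $u,v\in T$: $\tau'(u)=\tau'(v)\Rightarrow\tau(u)=\tau(v)$.
   Context: Voxel grid and segmentation: $G=\{1,\dots,n_1\}\times\{1,\dots,n_2\}\times\{1,\dots,n_3\}$; voxels $v,w$ are adjacent iff $\sum_i|v_i-w_i|=1$. A segment label map is $\sigma:G\to\mathbb{N}=\{1,2,\dots\}$ such that each level set $\sigma^{-1}(l)$ is connected w.r.t. this adjacency. Topological grid: $T=\{1,\dots,2n_1-1\}\times\{1,\dots,2n_2-1\}\times\{1,\dots,2n_3-1\}$; a cell with exactly $j$ odd coordinates is a $j$-cell. Voxel $r$ corresponds to the 3-cell $2r-1$. Two cells are 6-neighbors if they differ by $1$ in exactly one coordinate. For a $j$-cell $t$, $\Gamma(t)$ is the set of 6-neighbors of $t$ in $T$ that are $(j+1)$-cells. Cells $t_1,t_2$ are connected, $t_1\leftrightarrow t_2$, iff there is $t\in T$ with $t_1,t_2\in\Gamma(t)$. Procedure LABEL: for a voxel box $\prod_i\{a_i,\dots,b_i\}\subseteq G$ let $B=\prod_i\{2a_i-1,\dots,2b_i-1\}$ be its cell box. $\mathrm{LABEL}(\sigma,B)$ produces $\lambda:B\to\mathbb{N}_0$: (1) $\lambda(2r-1)=\sigma(r)$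 for 3-cells. (2) For $j=2,1,0$ in this order: for each $j$-cell $t\in B$ let $\theta(t)$ be the set of positive integers occurring exactly once in $(\lambda(s))_{s\in\Gamma(t)}$; $t$ is active iff $\theta(t)\ne\emptyset$, inactive $j$-cells get label $0$; the active $j$-cells of $B$ are partitioned into maximal sets of cells with equal $\theta$ that are connected by $\leftrightarrow$-paths inside the set; these classes are numbered $1,\dots,m_j(B)$ arbitrarily and each active $j$-cell gets its class number. Reference labeling: $\tau=\mathrm{LABEL}(\sigma,T)$. Block-wise method: for each axis $i$ choose odd integers $1=a^i_0<\dots<a^i_{m_i}=2n_i-1$; blocks are the boxes $\prod_i\{a^i_{k_i-1},\dots,a^i_{k_i}\}$. Step 1: $\lambda_B=\mathrm{LABEL}(\sigma,B)$ for each block. Step 2: with blocks ordered $B_1,\dots,B_K$, add offset $\sum_{k'<k}m_j(B_{k'})$ to each positive $j$-cell label of $\lambda_{B_k}$ ($j\in\{0,1,2\}$). Step 3: for $j\in\{1,2\}$, via union–find, unite the labels received in different blocks by any active $j$-cell lying in several blocks, and replace every positive $j$-cell label by its set representative. Step 4: for each 0-cell $t_0$ and each pair of distinct 1-cell labels occurring exactly once among the current labels of $\Gamma(t_0)$, merge the two labels if the corresponding 1-cells bound the same set of current 2-cell labels; if any merge took place at $t_0$, recompute the activity of $t_0$ and set its label to $0$ if inactive. The result is $\tau':T\to\mathbb{N}_0$. *)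

From Stdlib Require Import Relations.Relation_Operators.
From mathcomp Require Import all_boot.

Set Implicit Arguments.
Unset Strict Implicit.
Unset Printing Implicit Defensive.

Definition cell := (nat * nat * nat)%type.

Definition cx (c : cell) : nat := c.1.1.
Definition cy (c : cell) : nat := c.1.2.
Definition cz (c : cell) : nat := c.2.

Definition inG (n r : cell) : bool :=
  [&& 0 < cx r <= cx n, 0 < cy r <= cy n & 0 < cz r <= cz n].

Definition adist (a b : nat) : nat := (a - b) + (b - a).

Definition vadj (v w : cell) : Prop :=
  adist (cx v) (cx w) + adist (cy v) (cy w) + adist (cz v) (cz w) = 1.

Definition segment_label_map (n : cell) (sigma : cell -> nat) : Prop :=
  (forall r, inG n r -> 0 < sigma r) /\
  (forall r r', inG n r -> inG n r' -> sigma r = sigma r' ->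
     clos_refl_trans cell
       (fun a b => [/\ inG n a, inG n b, sigma a = sigma r, sigma b = sigma r & vadj a b])
       r r').

Definition inbox (lo hi c : cell) : bool :=
  [&& cx lo <= cx c <= cx hi, cy lo <= cy c <= cy hi & cz lo <= cz c <= cz hi].

Definition hiT (n : cell) : cell := (2 * cx n - 1, 2 * cy n - 1, 2 * cz n - 1).
Definition loT : cell := (1, 1, 1).
Definition inT (n c : cell) : bool := inbox loT (hiT n) c.

Definition cell_of_voxel (r : cell) : cell := (2 * cx r - 1, 2 * cy r - 1, 2 * cz r - 1).

(** a cell with exactly j odd coordinates is a j-cell *)
Definition dim (c : cell) : nat := odd (cx c) + odd (cy c) + odd (cz c).

(** Gamma(t): 6-neighbours of t in T that are (dim t + 1)-cells, i.e. the
    cells t -+ e_i for the axes i along which t has an even coordinate. *)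
Definition Gamma (n t : cell) : seq cell :=
  [seq s <- (if odd (cx t) then [::] else [:: (cx t - 1, cy t, cz t); (cx t + 1, cy t, cz t)])
         ++ (if odd (cy t) then [::] else [:: (cx t, cy t - 1, cz t); (cx t, cy t + 1, cz t)])
         ++ (if odd (cz t) then [::] else [:: (cx t, cy t, cz t - 1); (cx t, cy t, cz t + 1)])
  | inT n s].

Definition conn (n t1 t2 : cell) : Prop :=
  exists t, inT n t /\ t1 \in Gamma n t /\ t2 \in Gamma n t.

Definition triples (s1 s2 s3 : seq nat) : seq cell :=
  [seq (xy, z) | xy <- [seq (x, y) | x <- s1, y <- s2], z <- s3].
Definition cells_box (lo hi : cell) : seq cell :=
  triples (iota (cx lo) ((cx hi).+1 - cx lo))
          (iota (cy lo) ((cy hi).+1 - cy lo))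
          (iota (cz lo) ((cz hi).+1 - cz lo)).

(** theta(t): the positive labels occurring exactly once among the labels of
    Gamma(t) (as a sorted duplicate-free list, i.e. a canonical set). *)
Definition theta (n : cell) (lam : cell -> nat) (t : cell) : seq nat :=
  let ls := map lam (Gamma n t) in
  sort leq (undup [seq l <- ls | (0 < l) && (count_mem l ls == 1)]).

Definition active (n : cell) (lam : cell -> nat) (t : cell) : bool :=
  theta n lam t != [::].

Definition same_class (n lo hi : cell) (lam : cell -> nat) (t t' : cell) : Prop :=
  let P s := [&& inbox lo hi s, dim s == dim t, active n lam s & theta n lam s == theta n lam t] in
  P t /\ clos_refl_trans cell (fun a b => [/\ P a, P b & conn n a b]) t t'.

(** lam is a possible output of LABEL(sigma, B), B the cell box [lo, hi]
    (the numbering of classes being arbitrary). *)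
Definition label_valid (n : cell) (sigma : cell -> nat) (lo hi : cell) (lam : cell -> nat) : Prop :=
  (forall r, inbox lo hi (cell_of_voxel r) -> lam (cell_of_voxel r) = sigma r) /\
  (forall t, inbox lo hi t -> dim t < 3 -> ~~ active n lam t -> lam t = 0) /\
  (forall t, inbox lo hi t -> dim t < 3 -> active n lam t -> 0 < lam t) /\
  (forall t t', inbox lo hi t -> inbox lo hi t' -> dim t < 3 -> dim t' = dim t ->
     active n lam t -> active n lam t' -> (lam t = lam t' <-> same_class n lo hi lam t t')) /\
  (* the classes are numbered 1, ..., m_j(B) *)
  (forall t k, inbox lo hi t -> dim t < 3 -> active n lam t -> 0 < k <= lam t ->
     exists t', [/\ inbox lo hi t', dim t' = dim t, active n lam t' & lam t' = k]).

(** m_j(B): number of classes of j-cells = largest j-cell label in B. *)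
Definition mj (lam : cell -> nat) (lo hi : cell) (j : nat) : nat :=
  \max_(t <- cells_box lo hi | dim t == j) lam t.

Definition valid_axis (ni : nat) (a : seq nat) : Prop :=
  [/\ 2 <= size a, nth 0 a 0 = 1, last 0 a = 2 * ni - 1, sorted ltn a & all odd a].

Definition block_indices (A1 A2 A3 : seq nat) : seq cell :=
  triples (iota 1 (size A1).-1) (iota 1 (size A2).-1) (iota 1 (size A3).-1).
Definition blo (A1 A2 A3 : seq nat) (b : cell) : cell :=
  (nth 0 A1 (cx b).-1, nth 0 A2 (cy b).-1, nth 0 A3 (cz b).-1).
Definition bhi (A1 A2 A3 : seq nat) (b : cell) : cell :=
  (nth 0 A1 (cx b), nth 0 A2 (cy b), nth 0 A3 (cz b)).

Section Blockwise.
Variables (A1 A2 A3 : seq nat) (bl : seq cell) (lam : nat -> cell -> nat).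

Definition bk (k : nat) : cell := nth (0, 0, 0) bl k.
Definition in_blk (k : nat) (t : cell) : bool :=
  (k < size bl) && inbox (blo A1 A2 A3 (bk k)) (bhi A1 A2 A3 (bk k)) t.

Definition offset (k j : nat) : nat :=
  \sum_(0 <= k' < k) mj (lam k') (blo A1 A2 A3 (bk k')) (bhi A1 A2 A3 (bk k')) j.
Definition off (k : nat) (t : cell) : nat :=
  if 0 < lam k t then lam k t + offset k (dim t) else 0.

Definition unite (j : nat) (x y : nat) : Prop :=
  exists k k' t, in_blk k t /\ in_blk k' t /\ dim t = j /\ 0 < lam k t /\ 0 < lam k' t /\
                 x = off k t /\ y = off k' t.

Definition lab3 (rep : nat -> nat) (t : cell) : nat :=
  if [seq k <- iota 0 (size bl) | in_blk k t && (0 < lam k t)] is k :: _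
  then rep (off k t) else 0.
End Blockwise.

Definition is_rep (R : nat -> nat -> Prop) (rep : nat -> nat) : Prop :=
  (forall x y, rep x = rep y <-> clos_refl_sym_trans nat R x y) /\
  (forall x, clos_refl_sym_trans nat R x (rep x)).

(** Step 4 at the 0-cell t0: cur maps step-3 1-cell labels to current
    1-cell labels; L2 gives the (current) 2-cell labels; cur' is the new map. *)
Definition step4 (n : cell) (L1 L2 : cell -> nat) (cur : nat -> nat) (t0 : cell)
    (cur' : nat -> nat) : Prop :=
  let cl w := cur (L1 w) in
  let labs := map cl (Gamma n t0) in
  let once w := (0 < cl w) && (count_mem (cl w) labs == 1) in
  let bnd w := map L2 (Gamma n w) in
  let pair x y := exists w1 w2,
      w1 \in Gamma n t0 /\ w2 \in Gamma n t0 /\ once w1 /\ once w2 /\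
      cl w1 <> cl w2 /\ bnd w1 =i bnd w2 /\ x = cl w1 /\ y = cl w2 in
  exists rep, is_rep pair rep /\ cur' =1 (fun x => rep (cur x)).

(** tau' is a possible output of the block-wise method (all choices -- block
    order, per-block arbitrary numbering, union-find representatives, order
    of processing 0-cells -- being arbitrary).  The labels of 0-cells are
    left unconstrained. *)
Definition blockwise_out (n : cell) (sigma : cell -> nat) (A1 A2 A3 : seq nat)
    (tau' : cell -> nat) : Prop :=
  exists (bl : seq cell) (lam : nat -> cell -> nat) (rep1 rep2 : nat -> nat)
         (ord0 : seq cell) (cur : nat -> nat -> nat),
  perm_eq bl (block_indices A1 A2 A3) /\
      (forall k, k < size bl ->
         label_valid n sigma (blo A1 A2 A3 (bk bl k)) (bhi A1 A2 A3 (bk bl k)) (lam k)) /\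
      is_rep (unite A1 A2 A3 bl lam 1) rep1 /\
      is_rep (unite A1 A2 A3 bl lam 2) rep2 /\
      perm_eq ord0 [seq t <- cells_box loT (hiT n) | dim t == 0] /\
      cur 0 =1 id /\
      (forall i, i < size ord0 ->
         step4 n (lab3 A1 A2 A3 bl lam rep1) (lab3 A1 A2 A3 bl lam rep2)
               (cur i) (nth (0, 0, 0) ord0 i) (cur i.+1)) /\
      (forall u, inT n u -> dim u = 1 -> tau' u = cur (size ord0) (lab3 A1 A2 A3 bl lam rep1 u)) /\
          (forall s, inT n s -> dim s = 2 -> tau' s = lab3 A1 A2 A3 bl lam rep2 s) /\
          (forall r, inG n r -> tau' (cell_of_voxel r) = sigma r).

From Stdlib Require Import Relations.Relation_Operators.
From mathcomp Require Import all_boot zify.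

Set Implicit Arguments.
Unset Strict Implicit.
Unset Printing Implicit Defensive.

(* A block box has odd corners, so it is closed under Gamma from its own cells, and LABEL on a block
   sees the same 3-cell labels, hence the same theta on 2-cells, as LABEL on T; for a 1-cell the thetas
   correspond through its faces, whose block and global labels agree up to renaming.  Hence every
   class found inside a block lies in one global class.  The offsets of step 2 make the labels of
   different blocks disjoint and the union-find of step 3 only joins labels carried by a common cell,
   so after step 3 equal labels of 1- or 2-cells already force equal tau.  Step 4 merges two 1-cells
   at a 0-cell only if they bound the same set of 2-cell labels; at an active 1-cell every positive
   face label occurs exactly once, so the two 1-cells have the same theta and, being connected
   through the 0-cell, the same tau. *)

Lemma inTE n c : inT n c =
  [&& 0 < cx c <= 2 * cx n - 1, 0 < cy c <= 2 * cy n - 1 & 0 < cz c <= 2 * cz n - 1].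
Proof. by []. Qed.

Definition Gamma_step (i : cell -> nat) (t s : cell) : Prop :=
  ~~ odd (i t) /\ (i s = i t - 1 \/ i s = i t + 1).

Lemma mem_Gamma n t s : s \in Gamma n t -> inT n s /\
  [\/ [/\ Gamma_step cx t s, cy s = cy t & cz s = cz t],
      [/\ Gamma_step cy t s, cx s = cx t & cz s = cz t] |
      [/\ Gamma_step cz t s, cx s = cx t & cy s = cy t]].
Proof.
rewrite /Gamma mem_filter => /andP[sT sG]; split=> //; move: sG.
case: t => [[x y] z]; rewrite /Gamma_step /cx /cy /cz /=.
case: (boolP (odd x)) => ?; case: (boolP (odd y)) => ?; case: (boolP (odd z)) => ?;
  rewrite /= ?inE => //; do ?[case/orP=> [/eqP->|]]; try move/eqP->;
  first [apply: Or31; by do !split; auto | apply: Or32; by do !split; auto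
        | apply: Or33; by do !split; auto].
Qed.

Lemma odd_Gamma_step a b : ~~ odd a -> 0 < b -> b = a - 1 \/ b = a + 1 -> odd b.
Proof.
move=> ea b0 [eb|->]; last by rewrite addn1 /= ea.
by rewrite eb oddB; [rewrite addbT ea | lia].
Qed.

Lemma Gamma_dim n t s : s \in Gamma n t -> dim s = (dim t).+1.
Proof.
move=> /mem_Gamma[/and3P[/andP[sx _] /andP[sy _] /andP[sz _]]].
rewrite /dim => -[] [[ev st] e1 e2]; rewrite e1 e2 (negbTE ev) (odd_Gamma_step ev _ st) //;
  by case: odd; case: odd.
Qed.

Lemma Gamma_step_bounds l h a b : odd l -> odd h -> ~~ odd a -> l <= a <= h ->
  b = a - 1 \/ b = a + 1 -> l <= b <= h.
Proof.
move=> ol oh ea /andP[la ah].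
have la' : l != a by apply: contraNneq ea => <-.
have ah' : a != h by apply: contraNneq ea => ->.
by case=> ->; lia.
Qed.

Definition odd_box (lo hi : cell) : bool := all odd [:: cx lo; cy lo; cz lo; cx hi; cy hi; cz hi].

Lemma Gamma_box n lo hi t s : odd_box lo hi -> inbox lo hi t -> s \in Gamma n t -> inbox lo hi s.
Proof.
rewrite /odd_box /= => /and4P[o1 o2 o3 /and4P[o4 o5 o6 _]] /and3P[tx ty tz].
case/mem_Gamma=> _ [] [[ev st] e1 e2]; rewrite /inbox ?e1 ?e2 ?tx ?ty ?tz //=.
- by rewrite (Gamma_step_bounds o1 o4 ev tx st).
- by rewrite (Gamma_step_bounds o2 o5 ev ty st).
- by rewrite (Gamma_step_bounds o3 o6 ev tz st).
Qed.

Lemma dim3_voxel n c : inT n c -> dim c = 3 -> exists2 r, inG n r & c = cell_of_voxel r.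
Proof.
have half_odd k : odd k -> k = 2 * uphalf k - 1.
  by move=> ok; have := odd_double_half k; rewrite uphalf_half ok -mul2n /=; move: k./2; lia.
case: n c => [[n1 n2] n3] [[x y] z]; rewrite inTE /dim /cx /cy /cz /=.
case/and3P=> /andP[x0 xn] /andP[y0 yn] /andP[z0 zn].
case ox: (odd x); case oy: (odd y); case oz: (odd z) => // _.
exists (uphalf x, uphalf y, uphalf z); last by rewrite /cell_of_voxel /= -!half_odd.
move: (half_odd x ox) (half_odd y oy) (half_odd z oz).
by rewrite /inG /cx /cy /cz /= => ex ey ez; apply/and3P; split; apply/andP; split; lia.
Qed.

Lemma edge_faces n w : inT n w -> dim w = 1 ->
  exists f1 f2 f3 f4 v1 v2 v3 v4,
  [/\ Gamma n w = [:: f1; f2; f3; f4], Gamma n f1 = [:: v1; v2], Gamma n f2 = [:: v3; v4],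
      Gamma n f3 = [:: v1; v3] & Gamma n f4 = [:: v2; v4]].
Proof.
have even_step k : ~~ odd k -> 0 < k -> [/\ odd (k - 1), odd (k + 1) & k = 2 * k./2].
  move=> ek k0; rewrite oddB // addn1 /= addbT ek; split=> //.
  by have := odd_double_half k; rewrite (negbTE ek) -mul2n.
case: n w => [[n1 n2] n3] [[x y] z]; rewrite inTE /dim /cx /cy /cz /=.
case/and3P=> /andP[x0 xn] /andP[y0 yn] /andP[z0 zn].
have inT_intro a b c : 0 < a <= 2 * n1 - 1 -> 0 < b <= 2 * n2 - 1 -> 0 < c <= 2 * n3 - 1 ->
  inT (n1, n2, n3) (a, b, c) by rewrite inTE /= => -> -> ->.
case: (boolP (odd x)) => ox; case: (boolP (odd y)) => oy; case: (boolP (odd z)) => oz // _.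
- have [o1 o2 e1] := even_step y oy y0; have [o3 o4 e2] := even_step z oz z0.
  exists (x, y - 1, z), (x, y + 1, z), (x, y, z - 1), (x, y, z + 1).
  exists (x, y - 1, z - 1), (x, y - 1, z + 1), (x, y + 1, z - 1), (x, y + 1, z + 1).
  by split; rewrite /Gamma /cx /cy /cz /= ?ox ?o1 ?o2 ?o3 ?o4 ?(negbTE oy) ?(negbTE oz) /=
    ?inT_intro //; lia.
- have [o1 o2 e1] := even_step x ox x0; have [o3 o4 e2] := even_step z oz z0.
  exists (x - 1, y, z), (x + 1, y, z), (x, y, z - 1), (x, y, z + 1).
  exists (x - 1, y, z - 1), (x - 1, y, z + 1), (x + 1, y, z - 1), (x + 1, y, z + 1).
  by split; rewrite /Gamma /cx /cy /cz /= ?oy ?o1 ?o2 ?o3 ?o4 ?(negbTE ox) ?(negbTE oz) /=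
    ?inT_intro //; lia.
- have [o1 o2 e1] := even_step x ox x0; have [o3 o4 e2] := even_step y oy y0.
  exists (x - 1, y, z), (x + 1, y, z), (x, y - 1, z), (x, y + 1, z).
  exists (x - 1, y - 1, z), (x - 1, y + 1, z), (x + 1, y - 1, z), (x + 1, y + 1, z).
  by split; rewrite /Gamma /cx /cy /cz /= ?oz ?o1 ?o2 ?o3 ?o4 ?(negbTE ox) ?(negbTE oy) /=
    ?inT_intro //; lia.
Qed.

Lemma mem_theta n L t x : (x \in theta n L t) =
  [&& x \in map L (Gamma n t), 0 < x & count_mem x (map L (Gamma n t)) == 1].
Proof. by rewrite /theta mem_sort mem_undup mem_filter andbC. Qed.

Lemma theta_eq n L1 t1 L2 t2 : theta n L1 t1 =i theta n L2 t2 -> theta n L1 t1 = theta n L2 t2.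
Proof.
move=> eq12; apply: (sorted_eq leq_trans anti_leq); try exact: sort_sorted leq_total _.
by apply: uniq_perm eq12; rewrite sort_uniq undup_uniq.
Qed.

Lemma mem_theta_Gamma n L t x : x \in theta n L t -> exists2 s, s \in Gamma n t & x = L s.
Proof. by rewrite mem_theta => /and3P[/mapP]. Qed.

Lemma theta_gt0 n L t x : x \in theta n L t -> 0 < x.
Proof. by rewrite mem_theta => /and3P[]. Qed.

Lemma activeP n L t : reflect (exists x, x \in theta n L t) (active n L t).
Proof.
rewrite /active; case: (theta n L t) => [|a l] /=; first by right=> -[].
by left; exists a; rewrite inE eqxx.
Qed.

Definition pair_key (p q : nat) : seq nat :=
  if p == q then [::] else [:: minn p q; maxn p q].

Lemma pair_key_eqE p q r s :
  (pair_key p q == pair_key r s) =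
  if p == q then r == s
  else (r != s) && (((p == r) && (q == s)) || ((p == s) && (q == r))).
Proof.
rewrite /pair_key; case: (eqVneq p q) => [_|npq]; case: (eqVneq r s) => [_|nrs] //=.
rewrite /minn /maxn.
case: ltngtP npq => // ? _; case: ltngtP nrs => // ? _;
  rewrite !eqseq_cons andbT;
  case: (p =P r); case: (q =P s); case: (p =P s); case: (q =P r) => /=; lia.
Qed.

Local Ltac rewrite_neqs :=
  repeat match goal with
  | H : is_true (?x != ?x) |- _ => by rewrite eqxx in H
  | H : is_true (?x != ?y) |- _ =>
    rewrite ?(negbTE H); rewrite eq_sym in H; rewrite ?(negbTE H); clear H end.

(* The four faces around a 1-cell lie between the voxel pairs (a, b), (c, d), (a, c), (b, d) of a
   4-cycle; a repeated nonempty key makes every key repeat. *)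
Lemma square_keys_unique a b c d ks :
  ks = [:: pair_key a b; pair_key c d; pair_key a c; pair_key b d] ->
  has (fun k => (k != [::]) && (count_mem k ks == 1)) ks ->
  all (fun k => (k == [::]) || (count_mem k ks == 1)) ks.
Proof.
have nil_key p q : (pair_key p q == [::]) = (p == q) by rewrite /pair_key; case: (p =P q).
move=> ->; rewrite /= !eqxx !nil_key !pair_key_eqE.
case: (eqVneq a b) => [?|?]; case: (eqVneq a c) => [?|?]; case: (eqVneq a d) => [?|?];
case: (eqVneq b c) => [?|?]; case: (eqVneq b d) => [?|?]; case: (eqVneq c d) => [?|?];
subst; rewrite ?eqxx; rewrite_neqs; by [].
Qed.

Lemma theta_pair n L f p q : Gamma n f = [:: p; q] -> 0 < L p -> 0 < L q ->
  theta n L f = pair_key (L p) (L q).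
Proof.
rewrite /theta /pair_key => -> /= p0 q0; rewrite p0 q0 /= eqxx eq_sym.
case: (eqVneq (L p) (L q)) => [-> //|pq]; rewrite /= !addn0 !eqxx /= ?eqxx ?inE ?(negbTE pq) //=.
apply: (sorted_eq leq_trans anti_leq); first exact: sort_sorted leq_total _.
  by rewrite /= andbT geq_min leq_max leqnn.
rewrite perm_sort /minn /maxn; case: ltnP => _; first exact: perm_refl.
by rewrite perm_sym (perm_catC [:: L q]).
Qed.

Lemma clos_rt_mono (T : Type) (R R' : T -> T -> Prop) : (forall a b, R a b -> R' a b) ->
  forall x y, clos_refl_trans T R x y -> clos_refl_trans T R' x y.
Proof.
move=> RR' x y; elim=> [a b /RR' | a | a b c _ ? _]; first exact: rt_step; first exact: rt_refl.
exact: rt_trans.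
Qed.

Lemma clos_rt_restrictP (T : Type) (P : T -> bool) (R : T -> T -> Prop) x y :
  clos_refl_trans T (fun a b => [/\ P a, P b & R a b]) x y -> P x -> P y.
Proof. by elim=> [a b [] | | a b c _ Pab _ Pbc /Pab/Pbc]. Qed.

Section CoherentClosure.
Variables (X : Type) (R : X -> X -> Prop).

Lemma clos_rst_support (P : X -> Prop) x y : (forall a b, R a b -> P a /\ P b) ->
  clos_refl_sym_trans X R x y -> x = y \/ P x /\ P y.
Proof.
move=> RP; elim=> [a b /RP ab | a | a b _ [-> | [Pa Pb]]
  | a b c _ [-> | [Pa Pb]] _ [<- | [? Pc]]]; by [left | right].
Qed.

Variables (C V : Type) (carries : X -> C -> Prop) (f : C -> V).

Definition coherent x y := forall c c', carries x c -> carries y c' -> f c = f c'.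

Lemma clos_rst_coherent x y : (forall a, coherent a a) ->
  (forall a b, R a b -> [/\ coherent a b, exists c, carries a c & exists c, carries b c]) ->
  clos_refl_sym_trans X R x y -> coherent x y.
Proof.
move=> coh_refl coh_R.
have R_carried a b : R a b -> (exists c, carries a c) /\ (exists c, carries b c) by case/coh_R.
elim=> [a b /coh_R[] // | a | a b _ coh_ab c c' ac bc' | a b c ab coh_ab _ coh_bc].
- exact: coh_refl.
- by rewrite (coh_ab c' c).
case: (clos_rst_support R_carried ab)
  => [ab_eq | [_ [cb bcb]]] ca cc ac ccc; first by subst b; exact: coh_bc.
by rewrite (coh_ab ca cb) // (coh_bc cb cc).
Qed.
End CoherentClosure.

Section Label.
Variables (n lo hi : cell) (sigma lam : cell -> nat).
Hypothesis lamP : label_valid n sigma lo hi lam.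

Lemma label_gt0 t : inbox lo hi t -> dim t < 3 -> (0 < lam t) = active n lam t.
Proof.
case: lamP => _ [lam0 [lam_gt0 _]] tB tD.
by case: (boolP (active n lam t)) => At; [rewrite lam_gt0 | rewrite lam0].
Qed.

Lemma label_eq_theta t t' : inbox lo hi t -> inbox lo hi t' -> dim t < 3 -> dim t' = dim t ->
  active n lam t -> active n lam t' -> lam t = lam t' -> theta n lam t' = theta n lam t.
Proof.
case: lamP => _ [_ [_ [lam_class _]]] tB t'B tD t'D At At'.
case/(lam_class _ _ tB t'B tD t'D At At') => Pt path.
by have /and4P[_ _ _ /eqP] := clos_rt_restrictP path Pt.
Qed.

Lemma label_eq_conn t t' : inbox lo hi t -> inbox lo hi t' -> dim t < 3 -> dim t' = dim t ->
  conn n t t' -> lam t = lam t' <-> theta n lam t = theta n lam t'.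
Proof.
move=> tB t'B tD t'D tt'; have t'D3 : dim t' < 3 by rewrite t'D.
case: lamP => _ [lam0 [_ [lam_class _]]].
have theta0 s : ~~ active n lam s -> theta n lam s = [::] by rewrite negbK => /eqP.
case: (boolP (active n lam t)) => At; case: (boolP (active n lam t')) => At'.
- split=> [/(label_eq_theta tB t'B tD t'D At At')-> // | eq_theta].
  apply/(lam_class _ _ tB t'B tD t'D At At'); split; first by rewrite tB eqxx At eqxx.
  by apply: rt_step; split; rewrite ?tB ?t'B ?t'D ?At ?At' ?eq_theta ?eqxx.
- rewrite (lam0 t') // (theta0 t') //; split=> [lam_t | theta_t].
    by have := label_gt0 tB tD; rewrite lam_t At.
  by move: At; rewrite /active theta_t.
- rewrite (lam0 t) // (theta0 t) //; split=> [lam_t' | theta_t'].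
    by have := label_gt0 t'B t'D3; rewrite -lam_t' At'.
  by move: At'; rewrite /active -theta_t'.
- by rewrite !lam0 ?theta0.
Qed.
End Label.

Section Nested.
Variables (n lo hi lo' hi' : cell) (sigma lam tau : cell -> nat).
Hypotheses (lamP : label_valid n sigma lo hi lam) (tauP : label_valid n sigma lo' hi' tau).
Hypothesis sub_box : forall c, inbox lo hi c -> inbox lo' hi' c.

Lemma label_eq_transfer t t' :
  (forall a, inbox lo hi a -> dim a = dim t -> active n lam a -> theta n lam a = theta n lam t ->
     active n tau a /\ theta n tau a = theta n tau t) ->
  inbox lo hi t -> inbox lo hi t' -> dim t < 3 -> dim t' = dim t ->
  active n lam t -> active n lam t' -> lam t = lam t' -> tau t = tau t'.
Proof.
move=> transfer tB t'B tD t'D At At'.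
case: lamP => _ [_ [_ [lam_class _]]]; case: tauP => _ [_ [_ [tau_class _]]].
move/(lam_class _ _ tB t'B tD t'D At At') => -[Pt path].
have P_transfer a :
    [&& inbox lo hi a, dim a == dim t, active n lam a & theta n lam a == theta n lam t] ->
    [&& inbox lo' hi' a, dim a == dim t, active n tau a & theta n tau a == theta n tau t].
  case/and4P=> aB /eqP aD Aa /eqP Ta; have [-> ->] := transfer a aB aD Aa Ta.
  by rewrite sub_box // aD !eqxx.
have path' := clos_rt_mono
  (fun a b '(And3 Pa Pb ab) => And3 (P_transfer a Pa) (P_transfer b Pb) ab) path.
have /and4P[_ _ At'' _] := clos_rt_restrictP path' (P_transfer t Pt).
have [Att _] := transfer t tB erefl At erefl.
by apply/(tau_class _ _ (sub_box tB) (sub_box t'B) tD t'D Att At''); split; first exact: P_transfer.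
Qed.
End Nested.

Section Block.
Variables (n lo hi : cell) (sigma lam tau : cell -> nat).
Hypotheses (box_odd : odd_box lo hi) (box_sub : forall c, inbox lo hi c -> inT n c).
Hypotheses (lamP : label_valid n sigma lo hi lam) (tauP : label_valid n sigma loT (hiT n) tau).

Lemma label3_agree c : inbox lo hi c -> dim c = 3 -> lam c = tau c.
Proof.
move=> cB /(dim3_voxel (box_sub cB))[r _ cr]; case: lamP tauP => [lam3 _] [tau3 _].
by rewrite cr lam3 ?tau3 // -cr //; apply: box_sub.
Qed.

Lemma theta2_agree s : inbox lo hi s -> dim s = 2 -> theta n lam s = theta n tau s.
Proof.
move=> sB sD; congr (sort _ (undup _)); have -> // : map lam (Gamma n s) = map tau (Gamma n s).
by apply/eq_in_map=> v vs; rewrite label3_agree ?(Gamma_box _ sB vs) ?(Gamma_dim vs) ?sD.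
Qed.

Lemma active2_agree s : inbox lo hi s -> dim s = 2 -> active n lam s = active n tau s.
Proof. by move=> sB sD; rewrite /active theta2_agree. Qed.

Lemma label2_gt0_agree s : inbox lo hi s -> dim s = 2 -> (0 < lam s) = (0 < tau s).
Proof.
move=> sB sD; have sD3 : dim s < 3 by rewrite sD.
by rewrite (label_gt0 lamP sB sD3) (label_gt0 tauP (box_sub sB) sD3) active2_agree.
Qed.

Lemma label2_sound s s' : inbox lo hi s -> inbox lo hi s' -> dim s = 2 -> dim s' = 2 ->
  active n lam s -> active n lam s' -> lam s = lam s' -> tau s = tau s'.
Proof.
move=> sB s'B sD s'D; apply: (label_eq_transfer lamP tauP box_sub) => //; last by rewrite sD.
- move=> a aB; rewrite sD => aD Aa; rewrite -!theta2_agree // => ->.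
  by rewrite -active2_agree.
- by rewrite sD.
Qed.

Lemma face_label_eq w s s' : inbox lo hi w -> dim w = 1 -> s \in Gamma n w -> s' \in Gamma n w ->
  lam s = lam s' <-> tau s = tau s'.
Proof.
move=> wB wD sw s'w.
have [sB s'B] := (Gamma_box box_odd wB sw, Gamma_box box_odd wB s'w).
have [sD s'D] : dim s = 2 /\ dim s' = 2 by rewrite !(Gamma_dim sw, Gamma_dim s'w) wD.
have ss' : conn n s s' by exists w; rewrite box_sub.
rewrite (label_eq_conn lamP sB s'B _ _ ss') ?sD ?s'D //.
by rewrite (label_eq_conn tauP (box_sub sB) (box_sub s'B) _ _ ss') ?sD ?s'D // !theta2_agree.
Qed.

Lemma theta1_link w s : inbox lo hi w -> dim w = 1 -> s \in Gamma n w ->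
  (lam s \in theta n lam w) = (tau s \in theta n tau w).
Proof.
move=> wB wD sw; have sD : dim s = 2 by rewrite (Gamma_dim sw) wD.
rewrite !mem_theta !map_f //= label2_gt0_agree ?(Gamma_box box_odd wB sw) //.
congr (_ && (_ == 1)); rewrite !count_map; apply: eq_in_count => s' s'w /=.
by apply/eqP/eqP=> /(face_label_eq wB wD s'w sw).
Qed.

Lemma active_agree t : inbox lo hi t -> 0 < dim t < 3 -> active n lam t = active n tau t.
Proof.
move=> tB tR; have [tD|tD] : dim t = 1 \/ dim t = 2 by lia.
  2: exact: active2_agree.
apply/activeP/activeP=> -[x xt]; have [s st xE] := mem_theta_Gamma xt; subst x.
  by exists (tau s); rewrite -theta1_link.
by exists (lam s); rewrite theta1_link.
Qed.

Lemma theta_transfer t t' : inbox lo hi t -> inbox lo hi t' -> 0 < dim t < 3 -> dim t' = dim t ->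
  theta n lam t = theta n lam t' -> theta n tau t = theta n tau t'.
Proof.
move=> tB t'B tR; have [tD|tD] : dim t = 1 \/ dim t = 2 by lia.
  2: by move=> t'D; rewrite -!theta2_agree // t'D.
have sub a b : inbox lo hi a -> inbox lo hi b -> dim a = 1 -> dim b = 1 ->
    theta n lam a = theta n lam b -> {subset theta n tau a <= theta n tau b}.
  move=> aB bB aD bD ab x xa; have [s sa xE] := mem_theta_Gamma xa; subst x.
  have sb : lam s \in theta n lam b by rewrite -ab (theta1_link aB aD sa).
  have [s' s'b ls] := mem_theta_Gamma sb.
  have [sB s'B] := (Gamma_box box_odd aB sa, Gamma_box box_odd bB s'b).
  have [sD s'D] : dim s = 2 /\ dim s' = 2 by rewrite (Gamma_dim sa) (Gamma_dim s'b) aD bD.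
  have [As As'] : active n lam s /\ active n lam s'.
    by rewrite -!(label_gt0 lamP) ?sD ?s'D // -ls (theta_gt0 sb).
  by rewrite (label2_sound sB s'B sD s'D As As' ls) -(theta1_link bB bD s'b) -ls.
by move=> t'D tt'; apply: theta_eq => x; apply/idP/idP; apply: sub; rewrite ?t'D.
Qed.

Lemma label_sound t t' : inbox lo hi t -> inbox lo hi t' -> 0 < dim t < 3 -> dim t' = dim t ->
  0 < lam t -> 0 < lam t' -> lam t = lam t' -> tau t = tau t'.
Proof.
move=> tB t'B tD t'D; have [tD3 t'D3] : dim t < 3 /\ dim t' < 3 by rewrite t'D; lia.
rewrite !(label_gt0 lamP) //; apply: (label_eq_transfer lamP tauP box_sub) => // a aB aD Aa aeq.
by rewrite -active_agree ?aD // (theta_transfer aB tB) ?aD.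
Qed.

Lemma label_gt0_agree t : inbox lo hi t -> 0 < dim t < 3 -> (0 < lam t) = (0 < tau t).
Proof.
move=> tB tD; have tD3 : dim t < 3 by lia.
by rewrite (label_gt0 lamP tB tD3) (label_gt0 tauP (box_sub tB) tD3) active_agree.
Qed.
End Block.

Lemma valid_axis_block ni a i : valid_axis ni a -> 0 < i < size a ->
  [/\ odd (nth 0 a i.-1), odd (nth 0 a i), 0 < nth 0 a i.-1 & nth 0 a i <= 2 * ni - 1].
Proof.
case=> sa a0 alast a_sorted /(all_nthP 0) a_odd /andP[i0 ia].
have a_mono j k : j <= k < size a -> nth 0 a j <= nth 0 a k.
  case/andP=> jk ka; rewrite leq_eqVlt in jk; case/orP: jk => [/eqP-> //|jk].
  by apply/ltnW/(sorted_ltn_nth ltn_trans) => //; rewrite inE; lia.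
split; [apply: a_odd; lia | exact: a_odd | |].
- by rewrite -a0 a_mono //; lia.
- by rewrite -alast -nth_last a_mono //; lia.
Qed.

Lemma valid_axis_cover ni a c : valid_axis ni a -> 0 < c <= 2 * ni - 1 ->
  exists2 i, 0 < i < size a & nth 0 a i.-1 <= c <= nth 0 a i.
Proof.
case=> sa a0 alast _ _ /andP[c0 cn].
have ex_i : exists i, (0 < i < size a) && (c <= nth 0 a i).
  by exists (size a).-1; rewrite nth_last alast; apply/andP; split; lia.
case: (ex_minnP ex_i) => i /andP[iR ci] i_min; exists i => //; rewrite ci andbT.
case: i iR ci i_min => [|[|i]] //= iR ci i_min; first by rewrite a0.
by rewrite leqNgt; apply/negP=> /ltnW ci'; have := i_min i.+1; rewrite ci'; lia.
Qed.

Lemma mem_triples (s1 s2 s3 : seq nat) x y z :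
  ((x, y, z) \in triples s1 s2 s3) = [&& x \in s1, y \in s2 & z \in s3].
Proof.
apply/allpairsP/and3P=> [[[[x' y'] z'] [/allpairsP[[x'' y''] [/= ? ? [-> ->]]] ? [-> -> ->]]] |
  [xs ys zs]]; first by [].
by exists (x, y, z); split=> //; apply/allpairsP; exists (x, y).
Qed.

Lemma mem_cells_box lo hi t : (t \in cells_box lo hi) = inbox lo hi t.
Proof.
case: t => [[x y] z]; rewrite mem_triples !mem_iota /inbox /cx /cy /cz /=.
have iotaE p q r : (p <= r < p + (q.+1 - p)) = (p <= r <= q).
  by apply/andP/andP=> [[? ?]|[? ?]]; split=> //; lia.
by rewrite !iotaE.
Qed.

Section Blocks.
Variables (n1 n2 n3 : nat) (A1 A2 A3 : seq nat) (bl : seq cell).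
Local Notation n := (n1, n2, n3).
Hypotheses (A1P : valid_axis n1 A1) (A2P : valid_axis n2 A2) (A3P : valid_axis n3 A3).
Hypothesis blP : perm_eq bl (block_indices A1 A2 A3).
Local Notation lo k := (blo A1 A2 A3 (bk bl k)).
Local Notation hi k := (bhi A1 A2 A3 (bk bl k)).

Lemma block_odd_box k : k < size bl ->
  odd_box (lo k) (hi k) /\ forall c, inbox (lo k) (hi k) c -> inT n c.
Proof.
move=> kbl; have : bk bl k \in block_indices A1 A2 A3 by rewrite -(perm_mem blP) mem_nth.
case: (bk bl k) => [[x y] z]; rewrite mem_triples !mem_iota /blo /bhi /cx /cy /cz /=.
have iota_rng i (a : seq nat) : 0 < i < 1 + (size a).-1 -> 0 < i < size a.
  by case: (size a) => /=; lia.
case/and3P=> xR yR zR.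
have [ox ox' x0 xn] := valid_axis_block A1P (iota_rng _ _ xR).
have [oy oy' y0 yn] := valid_axis_block A2P (iota_rng _ _ yR).
have [oz oz' z0 zn] := valid_axis_block A3P (iota_rng _ _ zR).
split; first by rewrite /odd_box /= ox ox' oy oy' oz oz'.
by case=> [[a b] c]; rewrite inTE /inbox /cx /cy /cz /= => /and3P[/andP[? ?] /andP[? ?] /andP[? ?]];
  apply/and3P; split; apply/andP; split; lia.
Qed.

Lemma block_cover t : inT n t -> exists k, in_blk A1 A2 A3 bl k t.
Proof.
case: t => [[x y] z]; rewrite inTE /cx /cy /cz /= => /and3P[xR yR zR].
have [i1 i1R /andP[l1 h1]] := valid_axis_cover A1P xR.
have [i2 i2R /andP[l2 h2]] := valid_axis_cover A2P yR.
have [i3 i3R /andP[l3 h3]] := valid_axis_cover A3P zR.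
have ibl : (i1, i2, i3) \in bl.
  rewrite (perm_mem blP) mem_triples !mem_iota.
  by move: i1R i2R i3R; case: (size A1); case: (size A2); case: (size A3) => /=; lia.
exists (index (i1, i2, i3) bl).
rewrite /in_blk index_mem ibl /bk nth_index //= /inbox /blo /bhi /cx /cy /cz /=.
by rewrite l1 h1 l2 h2 l3 h3.
Qed.
End Blocks.

Section Offsets.
Variables (A1 A2 A3 : seq nat) (bl : seq cell) (lam : nat -> cell -> nat).
Local Notation lo k := (blo A1 A2 A3 (bk bl k)).
Local Notation hi k := (bhi A1 A2 A3 (bk bl k)).
Local Notation off := (off A1 A2 A3 bl lam).

Lemma off_range k t : in_blk A1 A2 A3 bl k t -> 0 < lam k t ->
  offset A1 A2 A3 bl lam k (dim t) < off k t <= offset A1 A2 A3 bl lam k.+1 (dim t).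
Proof.
case/andP=> _ tB lt0; rewrite /off lt0 /offset big_nat_recr //= addnC.
rewrite -[X in X < _]addn0 ltn_add2l lt0 leq_add2l.
by apply: (leq_bigmax_seq (P := fun s => dim s == dim t)); rewrite ?mem_cells_box.
Qed.

Lemma offset_mono k k' j : k <= k' -> offset A1 A2 A3 bl lam k j <= offset A1 A2 A3 bl lam k' j.
Proof. by move=> kk'; rewrite /offset (big_cat_nat _ kk') //= leq_addr. Qed.

Lemma off_inj k t k' t' : in_blk A1 A2 A3 bl k t -> in_blk A1 A2 A3 bl k' t' -> dim t' = dim t ->
  0 < lam k t -> 0 < lam k' t' -> off k t = off k' t' -> k = k' /\ lam k t = lam k' t'.
Proof.
move=> tB t'B tt' lt0 lt'0.
have /andP[lo_t hi_t] := off_range tB lt0; have /andP[lo_t' hi_t'] := off_range t'B lt'0.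
case: (ltngtP k k') => [kk'|k'k|kk']; last subst k'.
- by have := offset_mono (dim t) kk'; rewrite tt' in lo_t'; lia.
- by have := offset_mono (dim t) k'k; rewrite tt' in hi_t'; lia.
- by rewrite /off lt0 lt'0 tt' => /addIn.
Qed.

Lemma off_gt0 k t : 0 < lam k t -> 0 < off k t.
Proof. by move=> lt0; rewrite /off lt0; lia. Qed.
End Offsets.

Section Steps23.
Variables (n1 n2 n3 : nat) (sigma tau : cell -> nat).
Variables (A1 A2 A3 : seq nat) (bl : seq cell) (lam : nat -> cell -> nat).
Local Notation n := (n1, n2, n3).
Local Notation lo k := (blo A1 A2 A3 (bk bl k)).
Local Notation hi k := (bhi A1 A2 A3 (bk bl k)).
Local Notation in_blk := (in_blk A1 A2 A3 bl).
Local Notation off := (off A1 A2 A3 bl lam).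
Local Notation lab3 := (lab3 A1 A2 A3 bl lam).
Hypotheses (A1P : valid_axis n1 A1) (A2P : valid_axis n2 A2) (A3P : valid_axis n3 A3).
Hypothesis blP : perm_eq bl (block_indices A1 A2 A3).
Hypothesis lamP : forall k, k < size bl -> label_valid n sigma (lo k) (hi k) (lam k).
Hypothesis tauP : label_valid n sigma loT (hiT n) tau.

Lemma in_blkP k t : in_blk k t ->
  [/\ odd_box (lo k) (hi k), forall c, inbox (lo k) (hi k) c -> inT n c,
       label_valid n sigma (lo k) (hi k) (lam k) & inbox (lo k) (hi k) t].
Proof.
case/andP=> kbl tB; have [? ?] := block_odd_box A1P A2P A3P blP kbl.
by split=> //; apply: lamP.
Qed.

Lemma in_blk_gt0 k t : in_blk k t -> 0 < dim t < 3 -> (0 < lam k t) = (0 < tau t).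
Proof. by case/in_blkP=> ob bs lP tB; exact: (label_gt0_agree ob bs lP tauP tB). Qed.

Definition carries_off j x (kt : nat * cell) : Prop :=
  [/\ in_blk kt.1 kt.2, dim kt.2 = j, 0 < lam kt.1 kt.2 & off kt.1 kt.2 = x].

Lemma unite_coherent j x y : 0 < j < 3 ->
  clos_refl_sym_trans nat (unite A1 A2 A3 bl lam j) x y ->
  coherent (carries_off j) (fun kt => tau kt.2) x y.
Proof.
move=> jR; have coh_refl a : coherent (carries_off j) (fun kt => tau kt.2) a a.
  move=> [k t] [k' t'] [/= tB tD lt0 <-] [/= t'B t'D lt'0 /esym].
  case/(off_inj tB t'B _ lt0 lt'0); rewrite ?tD ?t'D // => kk' ltt'; subst k'.
  case/in_blkP: tB => ob bs lP tB; case/in_blkP: t'B => _ _ _ t'B.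
  by apply: (label_sound ob bs lP tauP tB t'B); rewrite ?tD ?t'D.
apply: clos_rst_coherent => // a b [k [k' [t [tB [t'B [tD [lt0 [lt'0 [-> ->]]]]]]]]].
split; [move=> c c' ac bc' | by exists (k, t) | by exists (k', t)].
by rewrite (coh_refl _ c (k, t) ac) // (coh_refl _ (k', t) c' _ bc').
Qed.

Lemma rep_gt0 j rep x : is_rep (unite A1 A2 A3 bl lam j) rep -> (exists kt, carries_off j x kt) ->
  0 < rep x.
Proof.
have carried_gt0 y : (exists kt, carries_off j y kt) -> 0 < y.
  by case=> -[k t] [_ _ lt0 <-]; exact: off_gt0.
case=> _ rep_class x_carried; apply: carried_gt0.
have unite_carried a b : unite A1 A2 A3 bl lam j a b ->
    (exists kt, carries_off j a kt) /\ (exists kt, carries_off j b kt).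
  case=> [k [k' [t [tB [t'B [tD [lt0 [lt'0 [-> ->]]]]]]]]].
  by split; [exists (k, t) | exists (k', t)].
by case: (clos_rst_support unite_carried (rep_class x)) => [<- | []].
Qed.

Lemma lab3P rep t :
  (exists k, [/\ lab3 rep t = rep (off k t), in_blk k t & 0 < lam k t]) \/
  (lab3 rep t = 0 /\ forall k, in_blk k t -> lam k t = 0).
Proof.
rewrite /lab3; set ks := [seq k <- iota 0 (size bl) | _].
have mem_ks k : (k \in ks) = in_blk k t && (0 < lam k t).
  rewrite mem_filter mem_iota /=; case kt: (in_blk k t) => //=.
  by case/andP: kt => ->; rewrite andbT.
case: ks mem_ks => [|k ks'] mem_ks; [right | left].
  by split=> // k kt; apply/eqP; rewrite -leqn0 leqNgt -[_ < _]andTb -kt -mem_ks.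
by exists k; have /andP[] : in_blk k t && (0 < lam k t) by rewrite -mem_ks mem_head.
Qed.

Lemma lab3_gt0 j rep t : 0 < j < 3 -> is_rep (unite A1 A2 A3 bl lam j) rep ->
  inT n t -> dim t = j -> (0 < lab3 rep t) = (0 < tau t).
Proof.
move=> jR repP tT tD; have tR : 0 < dim t < 3 by rewrite tD.
case: (lab3P rep t) => [[k [-> kt lt0]] | [-> lam0]].
  by rewrite -(in_blk_gt0 kt tR) lt0 (rep_gt0 repP) //; exists (k, t).
by have [k kt] := block_cover A1P A2P A3P blP tT; rewrite -(in_blk_gt0 kt tR) lam0.
Qed.

Lemma lab3_sound j rep u v : 0 < j < 3 -> is_rep (unite A1 A2 A3 bl lam j) rep ->
  inT n u -> inT n v -> dim u = j -> dim v = j -> lab3 rep u = lab3 rep v -> tau u = tau v.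
Proof.
move=> jR repP uT vT uD vD luv.
have tau0 w : inT n w -> dim w = j -> lab3 rep w = 0 -> tau w = 0.
  by move=> wT wD lw0; apply/eqP; rewrite eqn0Ngt -(lab3_gt0 jR repP wT wD) lw0.
have [lu0 | lu_gt0] := posnP (lab3 rep u); first by rewrite !tau0 // -luv.
have lab3_off w : 0 < lab3 rep w ->
    exists k, [/\ lab3 rep w = rep (off k w), in_blk k w & 0 < lam k w].
  by case: (lab3P rep w) => [// | [-> _]].
have [k [lu kt lt0]] := lab3_off u lu_gt0.
have lv_gt0 : 0 < lab3 rep v by rewrite -luv.
have [k' [lv k't' lt'0]] := lab3_off v lv_gt0.
case: repP luv => rep_class _; rewrite lu lv => /rep_class/(unite_coherent jR).
by move/(_ (k, u) (k', v)); apply; split.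
Qed.
End Steps23.

Section Edges.
Variables (n : cell) (sigma tau : cell -> nat).
Hypothesis sigma_gt0 : forall r, inG n r -> 0 < sigma r.
Hypothesis tauP : label_valid n sigma loT (hiT n) tau.

Lemma voxel_label_gt0 v : inT n v -> dim v = 3 -> 0 < tau v.
Proof.
move=> vT /(dim3_voxel vT)[r rG vr]; case: tauP => tau3 _.
by rewrite vr tau3 ?sigma_gt0 // -vr.
Qed.

Lemma face_label_eq_theta w f g : inT n w -> dim w = 1 -> f \in Gamma n w -> g \in Gamma n w ->
  tau f = tau g <-> theta n tau f = theta n tau g.
Proof.
move=> wT wD fw gw; have [[fT _] [gT _]] := (mem_Gamma fw, mem_Gamma gw).
apply: (label_eq_conn tauP fT gT); last by exists w.
  by rewrite (Gamma_dim fw) wD.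
by rewrite (Gamma_dim fw) (Gamma_dim gw).
Qed.

Lemma active_edge_theta w : inT n w -> dim w = 1 -> active n tau w ->
  forall x, (x \in theta n tau w) = (x \in map tau (Gamma n w)) && (0 < x).
Proof.
move=> wT wD Aw.
have [f1 [f2 [f3 [f4 [v1 [v2 [v3 [v4 [Gw G1 G2 G3 G4]]]]]]]]] := edge_faces wT wD.
have face f : f \in Gamma n w ->
    [/\ inT n f, dim f = 2 & forall v, v \in Gamma n f -> 0 < tau v].
  move=> fw; have [fT _] := mem_Gamma fw.
  have fD : dim f = 2 by rewrite (Gamma_dim fw) wD.
  split=> // v vf; have [vT _] := mem_Gamma vf.
  by apply: voxel_label_gt0; rewrite ?(Gamma_dim vf) ?fD.
have theta_face f p q : f \in Gamma n w -> Gamma n f = [:: p; q] ->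
    theta n tau f = pair_key (tau p) (tau q).
  move=> /face[_ _ v_gt0] Gf; apply: theta_pair => //; apply: v_gt0.
    by rewrite Gf !inE eqxx.
  by rewrite Gf !inE eqxx orbT.
have count_faces f : f \in Gamma n w -> count_mem (tau f) (map tau (Gamma n w)) =
    count_mem (theta n tau f) (map (theta n tau) (Gamma n w)).
  move=> fw; rewrite !count_map; apply: eq_in_count => g gw /=.
  by apply/eqP/eqP=> /(face_label_eq_theta wT wD gw fw).
have face_gt0 f : f \in Gamma n w -> (0 < tau f) = (theta n tau f != [::]).
  by move=> /face[fT fD _]; rewrite (label_gt0 tauP) ?fD.
have /square_keys_unique keys_unique : map (theta n tau) (Gamma n w) =
    [:: pair_key (tau v1) (tau v2); pair_key (tau v3) (tau v4);
        pair_key (tau v1) (tau v3); pair_key (tau v2) (tau v4)].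
  by rewrite {1}Gw /= !(theta_face _ _ _ _ G1, theta_face _ _ _ _ G2, theta_face _ _ _ _ G3,
    theta_face _ _ _ _ G4) // Gw !inE eqxx ?orbT.
have /allP all_unique :
    all (fun k => (k == [::]) || (count_mem k (map (theta n tau) (Gamma n w)) == 1))
      (map (theta n tau) (Gamma n w)).
  apply: keys_unique; case/activeP: Aw => x.
  rewrite mem_theta => /and3P[/mapP[f fw ->] f_gt0 f_once].
  by apply/hasP; exists (theta n tau f); rewrite ?map_f // -face_gt0 // f_gt0 -count_faces.
move=> x; rewrite mem_theta; case: (boolP (x \in _)) => //= /mapP[f fw ->].
case: (boolP (0 < tau f)) => //= f_gt0; rewrite count_faces //.
have theta_f : theta n tau f != [::] by rewrite -face_gt0.
by have := all_unique _ (map_f _ fw); rewrite (negbTE theta_f).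
Qed.
End Edges.

Section Step4.
Variables (n1 n2 n3 : nat) (sigma tau : cell -> nat).
Variables (A1 A2 A3 : seq nat) (bl : seq cell) (lam : nat -> cell -> nat) (rep1 rep2 : nat -> nat).
Local Notation n := (n1, n2, n3).
Local Notation L1 := (lab3 A1 A2 A3 bl lam rep1).
Local Notation L2 := (lab3 A1 A2 A3 bl lam rep2).
Hypothesis sigma_gt0 : forall r, inG n r -> 0 < sigma r.
Hypotheses (A1P : valid_axis n1 A1) (A2P : valid_axis n2 A2) (A3P : valid_axis n3 A3).
Hypothesis blP : perm_eq bl (block_indices A1 A2 A3).
Hypothesis lamP : forall k, k < size bl ->
  label_valid n sigma (blo A1 A2 A3 (bk bl k)) (bhi A1 A2 A3 (bk bl k)) (lam k).
Hypothesis tauP : label_valid n sigma loT (hiT n) tau.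
Hypothesis rep1P : is_rep (unite A1 A2 A3 bl lam 1) rep1.
Hypothesis rep2P : is_rep (unite A1 A2 A3 bl lam 2) rep2.

Definition cur_sound (cur : nat -> nat) : Prop :=
  cur 0 = 0 /\ forall u v, inT n u -> inT n v -> dim u = 1 -> dim v = 1 ->
    cur (L1 u) = cur (L1 v) -> tau u = tau v.

Lemma cur_sound_id cur : cur =1 id -> cur_sound cur.
Proof.
move=> curE; split=> [|u v uT vT uD vD]; rewrite !curE //.
by apply: (lab3_sound A1P A2P A3P blP lamP tauP _ rep1P); rewrite ?uD.
Qed.

Lemma cur_gt0_active (cur : nat -> nat) w : cur 0 = 0 -> inT n w -> dim w = 1 ->
  0 < cur (L1 w) -> active n tau w.
Proof.
move=> cur0 wT wD; rewrite -(label_gt0 tauP) ?wD //.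
rewrite -(lab3_gt0 A1P A2P A3P blP lamP tauP _ rep1P) //.
by case: (L1 w) => //; rewrite cur0.
Qed.

(* At an active 1-cell theta is the set of positive face labels (active_edge_theta), and faces
   with equal step-3 labels have equal tau. *)
Lemma merge_sound (cur : nat -> nat) t0 w1 w2 : cur 0 = 0 -> inT n t0 -> dim t0 = 0 ->
  w1 \in Gamma n t0 -> w2 \in Gamma n t0 -> 0 < cur (L1 w1) -> 0 < cur (L1 w2) ->
  map L2 (Gamma n w1) =i map L2 (Gamma n w2) -> tau w1 = tau w2.
Proof.
move=> cur0 t0T t0D w1t0 w2t0 w1_gt0 w2_gt0 bnd.
have edge w : w \in Gamma n t0 -> 0 < cur (L1 w) -> [/\ inT n w, dim w = 1 & active n tau w].
  move=> wt0 w_gt0; have [wT _] := mem_Gamma wt0.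
  have wD : dim w = 1 by rewrite (Gamma_dim wt0) t0D.
  by split=> //; apply: (cur_gt0_active cur0).
have [[w1T w1D act1] [w2T w2D act2]] := (edge _ w1t0 w1_gt0, edge _ w2t0 w2_gt0).
have sub wa wb : [/\ inT n wa, dim wa = 1 & active n tau wa] ->
    [/\ inT n wb, dim wb = 1 & active n tau wb] ->
    map L2 (Gamma n wa) =i map L2 (Gamma n wb) -> {subset theta n tau wa <= theta n tau wb}.
  case=> waT waD Aa [wbT wbD Ab] ab x.
  rewrite !(active_edge_theta sigma_gt0 tauP) // => /andP[/mapP[s sa ->] s_gt0].
  rewrite s_gt0 andbT.
  have /mapP[s' sb ls] : L2 s \in map L2 (Gamma n wb) by rewrite -ab map_f.
  have [[sT _] [s'T _]] := (mem_Gamma sa, mem_Gamma sb).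
  rewrite (lab3_sound A1P A2P A3P blP lamP tauP _ rep2P sT s'T _ _ ls) ?map_f //.
  - by rewrite (Gamma_dim sa) waD.
  - by rewrite (Gamma_dim sb) wbD.
have w12 : conn n w1 w2 by exists t0.
apply/(label_eq_conn tauP w1T w2T _ _ w12); rewrite ?w1D ?w2D //.
by apply: theta_eq => x; apply/idP/idP; apply: sub => //; move=> y; rewrite bnd.
Qed.

Lemma step4_sound cur t0 cur' : inT n t0 -> dim t0 = 0 -> step4 n L1 L2 cur t0 cur' ->
  cur_sound cur -> cur_sound cur'.
Proof.
move=> t0T t0D [rep [[rep_class rep_in] cur'E]] [cur0 cur_ok].
set merged := (fun x y => exists w1 w2, _) in rep_class rep_in.
have merged_gt0 x y : merged x y -> 0 < x /\ 0 < y.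
  by case=> w1 [w2 [_ [_ [/andP[? _] [/andP[? _] [_ [_ [-> ->]]]]]]]].
split.
  by rewrite cur'E /= cur0; case: (clos_rst_support merged_gt0 (rep_in 0)) => [<- | []].
pose carries x w := [/\ inT n w, dim w = 1 & cur (L1 w) = x].
have coh x y : clos_refl_sym_trans nat merged x y -> coherent carries tau x y.
  apply: clos_rst_coherent => [a w w' [wT wD <-] [w'T w'D /esym] | a b].
    exact: cur_ok.
  case=> w1 [w2 [w1t0 [w2t0 [/andP[w1_gt0 _] [/andP[w2_gt0 _] [_ [bnd [-> ->]]]]]]]].
  have [[w1T _] [w2T _]] := (mem_Gamma w1t0, mem_Gamma w2t0).
  have [w1D w2D] : dim w1 = 1 /\ dim w2 = 1 by rewrite (Gamma_dim w1t0) (Gamma_dim w2t0) t0D.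
  split; [move=> c c' [cT cD c1] [c'T c'D c2] | by exists w1 | by exists w2].
  rewrite (cur_ok c w1) // (merge_sound cur0 t0T t0D w1t0 w2t0 w1_gt0 w2_gt0 bnd).
  exact: cur_ok.
move=> u v uT vT uD vD; rewrite !cur'E => /rep_class/coh; apply; split=> //.
Qed.
End Step4.

Theorem proposition5 (n1 n2 n3 : nat) (sigma : cell -> nat)
    (A1 A2 A3 : seq nat) (tau tau' : cell -> nat) :
  segment_label_map (n1, n2, n3) sigma ->
  valid_axis n1 A1 -> valid_axis n2 A2 -> valid_axis n3 A3 ->
  label_valid (n1, n2, n3) sigma loT (hiT (n1, n2, n3)) tau ->
  blockwise_out (n1, n2, n3) sigma A1 A2 A3 tau' ->
  forall u v : cell, inT (n1, n2, n3) u -> inT (n1, n2, n3) v ->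
    dim u = 1 -> dim v = 1 ->
    tau' u = tau' v -> tau u = tau v.
Proof.
move=> [sigma_gt0 _] A1P A2P A3P tauP
  [bl [lam [rep1 [rep2 [ord0 [cur
    [blP [lamP [rep1P [rep2P [ord0P [cur0 [cur_step [tau'1 _]]]]]]]]]]]]]].
have sound i : i <= size ord0 -> cur_sound n1 n2 n3 tau A1 A2 A3 bl lam rep1 (cur i).
  elim: i => [_ | i IH iS]; first exact: (cur_sound_id A1P A2P A3P blP lamP tauP rep1P cur0).
  have : nth (0, 0, 0) ord0 i \in [seq t <- cells_box loT (hiT (n1, n2, n3)) | dim t == 0].
    by rewrite -(perm_mem ord0P) mem_nth.
  rewrite mem_filter mem_cells_box => /andP[/eqP t0D t0T].
  apply: (step4_sound sigma_gt0 A1P A2P A3P blP lamP tauP rep1P rep2P t0T t0D (cur_step i iS)).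
  exact: IH (ltnW iS).
move=> u v uT vT uD vD; rewrite !tau'1 //; exact: (sound _ (leqnn _)).2.
Qed.
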